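(* Let $n,m\ge0$ be integers, $d_1,\ldots,d_m,s$ positive integers, $g_\bullet=|n;d_1,\ldots,d_m|$ and $h_\bullet=|n;d_1,\ldots,d_m,s|$. Suppose $g_\bullet$ is unimodal at each tail. If there is a positive integer $i$ with $h_i\le h_{i-1}$, then $h_d\le h_{d-1}$ for all $d\ge i$; in this case, if $n\ge1$, then $h^{(1)}_\bullet=|n-1;d_1,\ldots,d_m,s|$.
   Context: For $P=\sum p_iz^i\in\mathbb{Z}[[z]]$ let $t=\min\{d:p_d\le0\}$ and $|P|=\sum q_iz^i$ with $q_i=p_i$ for $i<t$, $q_i=0$ for $i\ge t$. The Fröberg sequence $|n;d_1,\ldots,d_m|$ is the sequence $(h_0,h_1,\ldots)$ with $\sum h_iz^i=\left|\prod_{j=1}^m(1-z^{d_j})/(1-z)^n\right|$. For a sequence $h_\bullet$ of nonnegative integers with $h_0=1$: $h^{(0)}_\bullet=h_\bullet$; $h^{(i)}_0=1$ and $h^{(i)}_d=\max\{0,h^{(i-1)}_d-h^{(i-1)}_{d-1}\}$ for $d\ge1$ (in particular $h^{(1)}$ is given by this formula with $i=1$; in the definition of unimodality below it is used for $1\le i<h_1$). For $0\le i<\max\{1,h_1\}$, $r_i=\min\{d\ge1:h^{(i)}_d\le h^{(i)}_{d-1}\}$ ($\infty$ if none), $D(h_\bullet)=\min\{i:r_i<\infty\}$. The sequence is unimodal at each tail if for every $i$ with $D(h_\bullet)\le i<\max\{1,h_1\}$, $h^{(i)}_d\le h^{(i)}_{d-1}$ for all $d\ge r_i$. *)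

From mathcomp Require Import all_boot all_order all_algebra.
Set Implicit Arguments. Unset Strict Implicit. Unset Printing Implicit Defensive.
Import Order.TTheory GRing.Theory Num.Theory.

(* Formal power series in Z[[z]], as coefficient functions. *)
Definition ser := nat -> int.

Definition ser_one : ser := fun i => if i == 0%N then 1%R else 0%R.

(* multiplication by (1 - z^d) *)
Definition mul_1mz (d : nat) (p : ser) : ser :=
  fun i => (p i - (if (d <= i)%N then p (i - d)%N else 0))%R.

(* multiplication by 1/(1 - z) = 1 + z + z^2 + ... *)
Definition div_1mz (p : ser) : ser :=
  fun i => (\sum_(j < i.+1) p j)%R.

(* prod_{d in ds} (1 - z^d) / (1 - z)^n *)
Definition frob_ser (n : nat) (ds : seq nat) : ser :=
  iter n div_1mz (foldr mul_1mz ser_one ds).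

(* |P| : keep coefficients q_i = p_i for i < t = min{d : p_d <= 0}, 0 after.
   i < t iff p_j > 0 for all j <= i. *)
Definition trunc_ser (p : ser) : ser :=
  fun i => if [forall j : 'I_i.+1, (0 < p j)%R] then p i else 0%R.

(* The Froberg sequence |n; d_1, ..., d_m| (entries are nonnegative). *)
Definition frob (n : nat) (ds : seq nat) : nat -> nat :=
  fun i => absz (trunc_ser (frob_ser n ds) i).

(* h^(1) from h : h^(1)_0 = 1, h^(1)_d = max(0, h_d - h_{d-1}) *)
Definition hder (h : nat -> nat) : nat -> nat :=
  fun d => if d == 0%N then 1%N else (h d - h d.-1)%N.

Definition hiter (i : nat) (h : nat -> nat) : nat -> nat := iter i hder h.

(* r_i = r  (r_i = min{d >= 1 : h^(i)_d <= h^(i)_{d-1}}) *)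
Definition is_r (h : nat -> nat) (i r : nat) : Prop :=
  [/\ (1 <= r)%N, (hiter i h r <= hiter i h r.-1)%N &
      forall d, (1 <= d)%N -> (d < r)%N -> (hiter i h d.-1 < hiter i h d)%N].

Definition r_finite (h : nat -> nat) (i : nat) : Prop :=
  exists2 d, (1 <= d)%N & (hiter i h d <= hiter i h d.-1)%N.

(* unimodal at each tail: for every i with D(h) <= i < max(1, h_1),
   h^(i)_d <= h^(i)_{d-1} for all d >= r_i.
   D(h) <= i  iff some j <= i (with j < max(1,h_1)) has r_j finite. *)
Definition unimodal_tails (h : nat -> nat) : Prop :=
  forall i, (i < maxn 1 (h 1%N))%N ->
    (exists2 j, (j <= i)%N & r_finite h j) ->
    forall r, is_r h i r ->
    forall d, (r <= d)%N -> (hiter i h d <= hiter i h d.-1)%N.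

From mathcomp Require Import all_boot all_order all_algebra zify.
From Stdlib Require Import FunctionalExtensionality.
Import Order.TTheory GRing.Theory Num.Theory.

Set Implicit Arguments.
Unset Strict Implicit.
Unset Printing Implicit Defensive.

(* Let a = frob_ser n ds, so that |n; ds, s| truncates p = (1 - z^s) a, and write
   D for the first difference (multiplication by 1 - z).  On the positive prefix
   D p_d = D a_d - D a_(d-s).  Where g = |a| has started to fall, D a_d <= 0 while
   D a_(d-s) > 0, for otherwise unimodality of g would give a_d <= a_(d-s), i.e.
   p_d <= 0.  Where g still rises, D a = g^(1) is unimodal too, and a unimodal f
   with f_i <= f_(i-s) satisfies f_d <= f_(d-s) for all d >= i; applied at i this
   gives D p_d <= 0.  So |n; ds, s| is unimodal, and as it is the truncation of the
   partial sums of q = frob_ser (n-1) (ds, s), its first differences are |q|. *)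

Lemma mul_1mzC d e (p : ser) : mul_1mz d (mul_1mz e p) = mul_1mz e (mul_1mz d p).
Proof.
apply: functional_extensionality => i; rewrite /mul_1mz.
case: (leqP d i) => hd; case: (leqP e i) => he /=.
- rewrite (_ : (e <= i - d) = (d <= i - e)); last by apply/idP/idP; lia.
  case: ifP => _; last lia.
  by rewrite [(i - d - e)%N]subnAC; lia.
- by rewrite (_ : (e <= i - d) = false); [lia | apply/negbTE; rewrite -ltnNge; lia].
- by rewrite (_ : (d <= i - e) = false); [lia | apply/negbTE; rewrite -ltnNge; lia].
- lia.
Qed.

Lemma div_1mz_mul_1mz s (p : ser) : div_1mz (mul_1mz s p) = mul_1mz s (div_1mz p).
Proof.
apply: functional_extensionality => i; rewrite /mul_1mz /div_1mz sumrB.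
congr (_ - _)%R; rewrite -big_mkcond /=.
rewrite -(big_geq_mkord s i.+1 predT (fun j => p (j - s)%N)).
case: (leqP s i) => [s_le_i | i_lt_s]; last by rewrite big_geq.
rewrite -{1}(add0n s) big_addn subSn // big_mkord.
by apply: eq_big => // j _; rewrite addnK.
Qed.

Lemma frob_ser_rcons n ds s : frob_ser n (rcons ds s) = mul_1mz s (frob_ser n ds).
Proof.
rewrite /frob_ser foldr_rcons.
have -> : foldr mul_1mz (mul_1mz s ser_one) ds = mul_1mz s (foldr mul_1mz ser_one ds).
  by elim: ds => //= d ds ->; rewrite mul_1mzC.
by elim: n => //= n ->; rewrite div_1mz_mul_1mz.
Qed.

Lemma div_1mz0 (q : ser) : div_1mz q 0 = q 0.
Proof. by rewrite /div_1mz big_ord1. Qed.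

Lemma div_1mzS (q : ser) j : div_1mz q j.+1 = (div_1mz q j + q j.+1)%R.
Proof. by rewrite /div_1mz big_ord_recr. Qed.

Lemma frob_ser0 n ds : all (fun d => 0 < d) ds -> frob_ser n ds 0 = 1%R.
Proof.
move=> ds_pos; rewrite /frob_ser; elim: n => [|n IH] /=; last by rewrite div_1mz0.
elim: ds ds_pos => //= d ds IH /andP[d_gt0 /IH]; rewrite /mul_1mz leqNgt d_gt0.
by rewrite subr0.
Qed.

Lemma mul_1mz1_0 (b : ser) : mul_1mz 1 b 0 = b 0.
Proof. by rewrite /mul_1mz /= subr0. Qed.

Lemma mul_1mz1S (b : ser) j : mul_1mz 1 b j.+1 = (b j.+1 - b j)%R.
Proof. by rewrite /mul_1mz /= subn1. Qed.

Lemma mul_1mz1_mul_1mz s (a : ser) j :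
  mul_1mz 1 (mul_1mz s a) j = (mul_1mz 1 a j - if (s <= j)%N then mul_1mz 1 a (j - s)%N else 0)%R.
Proof. by rewrite mul_1mzC. Qed.

Lemma mul_1mz1_div_1mz (q : ser) : mul_1mz 1 (div_1mz q) =1 q.
Proof. by case=> [|j]; rewrite ?mul_1mz1_0 ?div_1mz0 // mul_1mz1S div_1mzS addrC addKr. Qed.

Definition trunc_seq (p : ser) : nat -> nat := fun i => absz (trunc_ser p i).

Definition pos_upto (p : ser) (d : nat) : bool := [forall j : 'I_d.+1, (0 < p j)%R].

Lemma pos_uptoP p d : reflect (forall j, j <= d -> (0 < p j)%R) (pos_upto p d).
Proof.
apply: (iffP forallP) => [p_pos j j_le_d | p_pos j]; last exact: p_pos (ltn_ord j).
exact: (p_pos (Ordinal (j_le_d : j < d.+1))).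
Qed.

Lemma pos_uptoPn p d : reflect (exists2 j, j <= d & (p j <= 0)%R) (~~ pos_upto p d).
Proof.
apply: (iffP forallPn) => [[j] | [j j_le_d p_j_le0]].
  by rewrite -leNgt => p_j_le0; exists j; rewrite // -ltnS.
by exists (Ordinal (j_le_d : j < d.+1)); rewrite -leNgt.
Qed.

Lemma trunc_seq_pos p d j : pos_upto p d -> j <= d -> (trunc_seq p j : int) = p j.
Proof.
move=> /pos_uptoP p_pos j_le_d; rewrite /trunc_seq /trunc_ser -/(pos_upto p j).
have -> : pos_upto p j by apply/pos_uptoP => k k_le_j; apply: p_pos; lia.
by rewrite abszE gtr0_norm // p_pos.
Qed.

Lemma trunc_seq_npos p d : ~~ pos_upto p d -> trunc_seq p d = 0.
Proof. by rewrite /trunc_seq /trunc_ser -/(pos_upto p d) => /negbTE ->. Qed.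

Lemma trunc_seq_le_pred b d j : pos_upto b d -> 0 < j -> j <= d ->
  (trunc_seq b j <= trunc_seq b j.-1) = (mul_1mz 1 b j <= 0)%R.
Proof.
case: j => // j b_pos _ j_lt_d.
by rewrite mul_1mz1S subr_le0 -lez_nat !(trunc_seq_pos b_pos) // ltnW.
Qed.

Lemma hder_trunc_seq b d k : b 0 = 1%R -> pos_upto b d -> k <= d ->
  (0 < k -> trunc_seq b k.-1 <= trunc_seq b k) -> (hder (trunc_seq b) k : int) = mul_1mz 1 b k.
Proof.
case: k => [b0 _ _ _ | k _ b_pos k_lt_d /(_ isT) b_le]; first by rewrite mul_1mz1_0 b0.
by rewrite /hder /= -subzn // mul_1mz1S !(trunc_seq_pos b_pos) // ltnW.
Qed.

Lemma pos_upto_mul_1mz s a d : 0 < s -> pos_upto (mul_1mz s a) d -> pos_upto a d.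
Proof.
move=> s_gt0 /pos_uptoP p_pos; apply/pos_uptoP => j; elim/ltn_ind: j => j IH j_le_d.
have := p_pos j j_le_d; rewrite /mul_1mz; case: ifP => s_le_j; last lia.
have : (0 < a (j - s)%N)%R by apply: IH; lia.
lia.
Qed.

Lemma pos_upto_div_1mz (q : ser) d : pos_upto q d -> pos_upto (div_1mz q) d.
Proof.
move=> /pos_uptoP q_pos; apply/pos_uptoP; elim=> [|j IH] j_le_d; first by rewrite div_1mz0 q_pos.
by rewrite div_1mzS addr_gt0 ?IH ?q_pos // ltnW.
Qed.

(* Once [f] stops increasing it never increases again; for [f = h^(i)] with
   [r_i] finite this is unimodality at the [i]-th tail. *)
Definition unimodal (f : nat -> nat) : Prop :=
  forall k, 0 < k -> f k <= f k.-1 -> forall d, k <= d -> f d <= f d.-1.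

Section Unimodal.

Variable f : nat -> nat.
Hypothesis f_unimodal : unimodal f.

Lemma unimodal_noninc k x y : 0 < k -> f k <= f k.-1 -> k.-1 <= x -> x <= y -> f y <= f x.
Proof.
move=> k_gt0 f_k x_ge; elim: y => [|y IH] x_le; first by rewrite leqn0 in x_le; rewrite (eqP x_le).
case: (leqP x y) => [x_le_y | y_lt_x]; last by rewrite (@anti_leq x y.+1) // x_le.
by apply: leq_trans (f_unimodal k_gt0 f_k (_ : k <= y.+1)) (IH x_le_y); lia.
Qed.

Lemma unimodal_desc x y z w : x < y -> f y <= f x -> y.-1 <= z -> z <= w -> f w <= f z.
Proof.
elim: y => // y IH x_lt_y f_y z_ge z_le_w.
case: (leqP (f y.+1) (f y)) => [f_drop | f_rise]; first exact: unimodal_noninc f_drop z_ge z_le_w.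
have x_lt_y' : x < y.
  rewrite ltn_neqAle -ltnS x_lt_y andbT; apply/eqP => x_eq_y.
  by move: f_y; rewrite x_eq_y leqNgt f_rise.
by apply: IH x_lt_y' (ltnW (leq_trans f_rise f_y)) _ z_le_w; lia.
Qed.

Lemma unimodal_desc_mono x y x' y' :
  x < y -> f y <= f x -> x <= x' -> y <= y' -> x' <= y' -> f y' <= f x'.
Proof.
move=> x_lt_y f_y x_le y_le x'_le_y'.
case: (leqP (f x) (f x')) => [f_x_le | f_x'_lt].
  by rewrite (leq_trans _ f_x_le) // (leq_trans _ f_y) // (@unimodal_desc x y) ?leq_pred.
have x_lt_x' : x < x' by rewrite ltn_neqAle x_le andbT; apply: contraTneq f_x'_lt => ->; rewrite ltnn.
exact: (@unimodal_desc x x') (ltnW f_x'_lt) (leq_pred _) x'_le_y'.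
Qed.

End Unimodal.

Lemma unimodal_tails_hiter h i : unimodal_tails h -> i < maxn 1 (h 1) -> unimodal (hiter i h).
Proof.
move=> h_tails i_lt k k_gt0 drop_k d k_le_d.
have drop_ex : exists k, (0 < k) && (hiter i h k <= hiter i h k.-1) by exists k; rewrite k_gt0.
case: (ex_minnP drop_ex) => r /andP[r_gt0 drop_r] r_min.
apply: (h_tails i i_lt _ r); first by exists i => //; exists k.
- split=> // e e_gt0 e_lt_r; rewrite ltnNge; apply/negP => drop_e.
  by have := r_min e; rewrite e_gt0 drop_e => /(_ isT); rewrite leqNgt e_lt_r.
- by rewrite (leq_trans _ k_le_d) // r_min ?k_gt0.
Qed.

Section TruncMul1mz.

Variables (a : ser) (s : nat).
Hypotheses (a0 : a 0 = 1%R) (s_gt0 : 0 < s) (a_tails : unimodal_tails (trunc_seq a)).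

Local Notation g := (trunc_seq a).
Local Notation p := (mul_1mz s a).

Let g_unimodal : unimodal g.
Proof. by apply: (@unimodal_tails_hiter g 0 a_tails); rewrite leq_max. Qed.

Section Prefix.

Variable d : nat.
Hypothesis p_pos : pos_upto p d.

Let a_pos : pos_upto a d.
Proof. exact: pos_upto_mul_1mz p_pos. Qed.

Lemma mul_1mz1_mul_1mz_fall : 0 < d -> g d <= g d.-1 -> (mul_1mz 1 p d <= 0)%R.
Proof.
move=> d_gt0; rewrite mul_1mz1_mul_1mz (trunc_seq_le_pred a_pos) // => a_fall.
case: leqP => [s_le_d | _]; last by rewrite subr0.
suff : (0 < mul_1mz 1 a (d - s)%N)%R by lia.
have [-> | e_gt0] := posnP (d - s); first by rewrite mul_1mz1_0; move/pos_uptoP: a_pos; apply.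
have e_le_d : d - s <= d := leq_subr s d.
rewrite ltNge -(trunc_seq_le_pred a_pos) //; apply/negP => a_fall_e.
have : g d <= g (d - s).
  by apply: (unimodal_desc_mono g_unimodal _ a_fall_e); rewrite ?ltn_predL ?leq_pred.
move/pos_uptoP: p_pos => /(_ d (leqnn d)); rewrite /mul_1mz s_le_d -lez_nat.
by rewrite !(trunc_seq_pos a_pos) //; lia.
Qed.

Lemma mul_1mz1_mul_1mz_rise i : 0 < i -> i <= d -> (mul_1mz 1 p i <= 0)%R -> g d.-1 < g d ->
  (mul_1mz 1 p d <= 0)%R.
Proof.
move=> i_gt0 i_le_d p_fall_i g_rise.
have d_gt0 : 0 < d := leq_trans i_gt0 i_le_d.
have g_rising k : 0 < k -> k <= d -> g k.-1 < g k.
  move=> k_gt0 k_le_d; rewrite ltnNge; apply/negP => g_fall_k.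
  by move: g_rise; rewrite ltnNge (g_unimodal k_gt0 g_fall_k k_le_d).
have c_unimodal : unimodal (hiter 1 g).
  have g0 : g 0 = 1 by apply/eqP; rewrite -eqz_nat (trunc_seq_pos a_pos) ?a0.
  have := g_rising 1 isT d_gt0; rewrite /= g0 => g1.
  by apply: (@unimodal_tails_hiter _ 1 a_tails); rewrite leq_max g1 orbT.
have cE k : k <= d -> (hiter 1 g k : int) = mul_1mz 1 a k.
  move=> k_le_d; apply: (hder_trunc_seq a0 a_pos k_le_d) => k_gt0.
  exact: ltnW (g_rising k k_gt0 k_le_d).
have s_le_i : s <= i.
  rewrite leqNgt; apply/negP => i_lt_s; move: p_fall_i.
  rewrite mul_1mz1_mul_1mz leqNgt i_lt_s subr0 -(trunc_seq_le_pred a_pos) //.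
  by rewrite leqNgt g_rising.
have c_fall : hiter 1 g i <= hiter 1 g (i - s).
  move: p_fall_i; rewrite mul_1mz1_mul_1mz s_le_i -lez_nat !cE ?(leq_trans (leq_subr s i)) //.
  by rewrite subr_le0.
have : hiter 1 g d <= hiter 1 g (d - s).
  by apply: (unimodal_desc_mono c_unimodal _ c_fall); rewrite ?leq_sub2r ?leq_subr // ltn_subrL s_gt0.
by rewrite mul_1mz1_mul_1mz (leq_trans s_le_i i_le_d) -lez_nat !cE ?leq_subr // subr_le0.
Qed.

End Prefix.

Lemma unimodal_trunc_mul_1mz : unimodal (trunc_seq p).
Proof.
move=> i i_gt0 h_fall_i d i_le_d.
have [p_pos | p_npos] := boolP (pos_upto p d); last by rewrite trunc_seq_npos.
have d_gt0 := leq_trans i_gt0 i_le_d.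
rewrite (trunc_seq_le_pred p_pos) //; rewrite (trunc_seq_le_pred p_pos) // in h_fall_i.
case: (leqP (g d) (g d.-1)) => [g_fall | g_rise]; first exact: mul_1mz1_mul_1mz_fall.
exact: mul_1mz1_mul_1mz_rise h_fall_i g_rise.
Qed.

End TruncMul1mz.

Lemma hder_trunc_div_1mz (q : ser) : q 0 = 1%R -> unimodal (trunc_seq (div_1mz q)) ->
  hder (trunc_seq (div_1mz q)) =1 trunc_seq q.
Proof.
move=> q0 P_unimodal d; have P0 : div_1mz q 0 = 1%R by rewrite div_1mz0.
have [q_pos | q_npos] := boolP (pos_upto q d).
  have P_pos := pos_upto_div_1mz q_pos.
  apply/eqP; rewrite -eqz_nat (trunc_seq_pos q_pos) // (hder_trunc_seq P0 P_pos) //.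
    by rewrite mul_1mz1_div_1mz.
  move=> d_gt0; apply: ltnW; rewrite ltnNge (trunc_seq_le_pred P_pos) // mul_1mz1_div_1mz -ltNge.
  by move/pos_uptoP: q_pos; apply.
case: d q_npos => [|d] q_npos.
  by case/pos_uptoPn: q_npos => j; rewrite leqn0 => /eqP ->; rewrite q0.
rewrite trunc_seq_npos //; apply/eqP; rewrite subn_eq0.
have [P_pos | P_npos] := boolP (pos_upto (div_1mz q) d.+1); last by rewrite trunc_seq_npos.
case/pos_uptoPn: q_npos => k k_le q_k.
have k_gt0 : 0 < k by rewrite lt0n; apply: contraTneq q_k => ->; rewrite q0.
apply: (P_unimodal k k_gt0 _ d.+1 k_le).
by rewrite (trunc_seq_le_pred P_pos) // mul_1mz1_div_1mz.
Qed.

Theorem lemma4p5 (n : nat) (ds : seq nat) (s : nat) :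
  all (fun d => 0 < d) ds -> 0 < s ->
  unimodal_tails (frob n ds) ->
  forall i, 0 < i -> frob n (rcons ds s) i <= frob n (rcons ds s) i.-1 ->
  (forall d, i <= d -> frob n (rcons ds s) d <= frob n (rcons ds s) d.-1) /\
  (1 <= n -> forall d, hiter 1 (frob n (rcons ds s)) d = frob n.-1 (rcons ds s) d).
Proof.
move=> ds_pos s_gt0 g_tails i i_gt0 h_fall_i.
have h_unimodal : unimodal (frob n (rcons ds s)).
  change (unimodal (trunc_seq (frob_ser n (rcons ds s)))); rewrite frob_ser_rcons.
  exact: unimodal_trunc_mul_1mz (frob_ser0 _ ds_pos) s_gt0 g_tails.
split; first exact: h_unimodal i i_gt0 h_fall_i.
case: n {g_tails h_fall_i} h_unimodal => // n h_unimodal _.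
have q0 : frob_ser n (rcons ds s) 0 = 1%R by rewrite frob_ser0 // all_rcons s_gt0 ds_pos.
exact: hder_trunc_div_1mz q0 h_unimodal.
Qed.
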